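(* Let $D$ be a CAEXT derivation ending in a configuration $C\neq\mathsf{unsat}$. Then in $C$, for all array terms $a,b$ and index terms $i$: if $\pi(a,b[i])\neq()$, then the formula $\mathcal R(a,b[i])\Rightarrow a[i]\approx b[i]$ is valid in the theory of extensional constant arrays.
   Context: Theory. Many-sorted first-order logic with equality. There is an index sort $\sigma$, an element sort $\tau$, and an array sort $(\sigma\to\tau)$, with function symbols: read $a[i]$, write $a\langle i\triangleleft u\rangle$, and constant array $\langle v\rangle$. The theory of extensional constant arrays consists of all interpretations satisfying: (row-eq) $\forall a,i,j,u.\ i\approx j\Rightarrow a\langle i\triangleleft u\rangle[j]\approx u$; (row-ne) $\forall a,i,j,u.\ i\not\approx j\Rightarrow a\langle i\triangleleft u\rangle[j]\approx a[j]$; (ext) $\forall a,b.\ a\approx b\Leftrightarrow \forall i.\ a[i]\approx b[i]$; (roc) $\forall i,v.\ \langle v\rangle[i]\approx v$. The empty theory treats all these symbols (and the array sort) as uninterpreted. $T(A)$ is the set of terms occurring in $A$, $T_{\mathcal A}(A)$ the set of array terms in $A$, and $W(A)=\{a\langle i\triangleleft u\rangle[i]\approx u \mid a\langle i\triangleleft u\rangle\in T(A)\}$. Configurations. A configuration is either $\mathsf{unsat}$ or a triple $\langle A,\mathcal I,\pi\rangle$ where $A$ is a set of formulas (with flat literals), $\mathcal I$ is either $\mathcal I_0=\mathsf{none}$ or an interpretation in the empty theory satisfying $A$, and $\pi$ maps pairs $(a,t)$ ($a$ an array term, $t$ a read term $b[i]$ or a constant array term $\langle v\rangle$) to either the undefined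 value $()$ or a pair $(r,c)$ with $r$ a formula and $c$ an array term. $\pi_0$ maps every pair to $()$; the initial configuration for $A$ is $\langle A,\mathcal I_0,\pi_0\rangle$. Reasons. $\mathcal R(a,t)=()$ if $\pi(a,t)=()$; otherwise $\mathcal R(a,t)=\top$ if $t=a$ or $t=a[i]$ for some $i$; otherwise $\mathcal R(a,t)=\mathcal R(c,t)\wedge r$ where $\pi(a,t)=(r,c)$. Updated indices $I(a,\langle v\rangle)$: $()$ if $\pi(a,\langle v\rangle)=()$; $\emptyset$ if $a=\langle v\rangle$; $I(b,\langle v\rangle)\cup\{j\}$ if $\pi(a,\langle v\rangle)=(\top,b)$ with $b=a\langle j\triangleleft u\rangle$ or $a=b\langle j\triangleleft u\rangle$; otherwise $I(c,\langle v\rangle)$ where $\pi(a,\langle v\rangle)=(r,c)$. ''$\mathcal I\models\varphi$'' refers to the current $\mathcal I$ (empty theory); such premises require $\mathcal I\ne\mathcal I_0$. ''Reset'' means $(\mathcal I,\pi):=(\mathcal I_0,\pi_0)$. Rules of CAEXT: Interp: if $\mathcal I=\mathcal I_0$ and $\mathcal I'\models A\cup W(A)$ in the empty theory, set $\mathcal I:=\mathcal I'$. Conf: if $A\cup W(A)$ is empty-theory unsatisfiable, derive $\mathsf{unsat}$. InitR: $a[i]\in T(A)$ ⟹ $\pi(a,a[i]):=(\top,a)$. InitW: $s=a\langle i\triangleleft u\rangle\in T(A)$ ⟹ $\pi(s,s[i]):=(\top,s)$. RowD: $\mathcal I\models i\not\approx j$, $\pi(a\langle j\triangleleft u\rangle,b[i])\ne()$,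 $\pi(a,b[i])=()$ ⟹ $\pi(a,b[i]):=(i\not\approx j,a\langle j\triangleleft u\rangle)$. RowU: $\mathcal I\models i\not\approx j$, $a\langle j\triangleleft u\rangle\in T(A)$, $\pi(a,b[i])\ne()$, $\pi(a\langle j\triangleleft u\rangle,b[i])=()$ ⟹ $\pi(a\langle j\triangleleft u\rangle,b[i]):=(i\not\approx j,a)$. EqR: $\mathcal I\models a\approx c$, $a,c\in T_{\mathcal A}(A)$, $a\approx c\in T(A)$, $\pi(a,b[i])\ne()$, $\pi(c,b[i])=()$ ⟹ $\pi(c,b[i]):=(a\approx c,a)$. EqL: symmetric, $\pi(a,b[i]):=(a\approx c,c)$. CongR: $\mathcal I\models i\approx k$, $\pi(a,b[i])\ne()$, $\pi(a,c[k])\ne()$, $\mathcal I\models b[i]\not\approx c[k]$ ⟹ add $\mathcal R(a,b[i])\wedge\mathcal R(a,c[k])\wedge i\approx k\Rightarrow b[i]\approx c[k]$ to $A$, reset. DisEq: $\mathcal I\models a\not\approx c$, $a,c\in T_{\mathcal A}(A)$, $a\approx c\in T(A)$, $k_{\{a,c\}}\notin T(A)$ ⟹ add $a\not\approx c\Rightarrow a[k_{\{a,c\}}]\not\approx c[k_{\{a,c\}}]$ (fresh index constant $k_{\{a,c\}}$), reset. Roc: $\pi(\langle v\rangle,b[i])\ne()$, $\mathcal I\models b[i]\not\approx v$ ⟹ add $\mathcal R(\langle v\rangle,b[i])\Rightarrow b[i]\approx v$, reset. InitC: $\langle v\rangle\in T(A)$ ⟹ $\pi(\langle v\rangle,\langle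 v\rangle):=(\top,\langle v\rangle)$. CowD: $\pi(a\langle j\triangleleft u\rangle,\langle v\rangle)\ne()$, $\pi(a,\langle v\rangle)=()$, $\mathcal I\models\exists i{:}\sigma.\bigwedge_{k\in I(a\langle j\triangleleft u\rangle,\langle v\rangle)\cup\{j\}}i\not\approx k$ ⟹ $\pi(a,\langle v\rangle):=(\top,a\langle j\triangleleft u\rangle)$. CowU: $\pi(a,\langle v\rangle)\ne()$, $\pi(a\langle j\triangleleft u\rangle,\langle v\rangle)=()$, $a\langle j\triangleleft u\rangle\in T(A)$, $\mathcal I\models\exists i{:}\sigma.\bigwedge_{k\in I(a,\langle v\rangle)\cup\{j\}}i\not\approx k$ ⟹ $\pi(a\langle j\triangleleft u\rangle,\langle v\rangle):=(\top,a)$. CEqR: $\mathcal I\models a\approx c$, $a,c\in T_{\mathcal A}(A)$, $a\approx c\in T(A)$, $\pi(a,\langle v\rangle)\ne()$, $\pi(c,\langle v\rangle)=()$ ⟹ $\pi(c,\langle v\rangle):=(a\approx c,a)$. CEqL: symmetric, $\pi(a,\langle v\rangle):=(a\approx c,c)$. CongC: $\pi(a,\langle v\rangle)\ne()$, $\pi(a,\langle w\rangle)\ne()$, $\mathcal I\models v\not\approx w$, $\mathcal I\models\exists i{:}\sigma.\bigwedge_{k\in I(a,\langle v\rangle)\cup I(a,\langle w\rangle)}i\not\approx k$ ⟹ add $\mathcal R(a,\langle v\rangle)\wedge\mathcal R(a,\langle w\rangle)\wedge\exists i{:}\sigma.\bigwedge_{k\in I(a,\langle v\rangle)\cup I(a,\langle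 w\rangle)}i\not\approx k\Rightarrow v\approx w$, reset. Conflict rules: CongR, DisEq, Roc, CongC. A derivation is a sequence of configurations starting from an initial configuration, each obtained from the previous by a rule application. *)

From Stdlib Require Import List.
Import ListNotations.

(* Syntax.  Three sorts: arrays (sigma -> tau), elements tau, indices sigma. *)

Inductive aterm : Type :=
| AVar   (n : nat)
| AWrite (a : aterm) (i : iterm) (u : eterm)
| AConst (v : eterm)
with eterm : Type :=
| EVar  (n : nat)
| ERead (a : aterm) (i : iterm)
with iterm : Type :=
| IVar (n : nat)
| IK   (a c : aterm).                       (* the fresh index constant k_{a,c} *)

Inductive term : Type :=
| TA (a : aterm) | TE (e : eterm) | TI (i : iterm).

(* Formulas.  [FExDist ks] is the formula  exists i:sigma. /\_{k in ks} i <> k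
   (the only quantified formula produced by the calculus; i is a bound
   variable distinct from all constants). *)
Inductive formula : Type :=
| FTrue | FFalse
| FEqI (i j : iterm) | FEqE (u v : eterm) | FEqA (a b : aterm)
| FNot (f : formula)
| FAnd (f g : formula) | FOr (f g : formula) | FImp (f g : formula)
| FExDist (ks : list iterm).

Fixpoint sub_a (a : aterm) : list term :=
  TA a :: match a with
          | AVar _ => []
          | AWrite b i u => sub_a b ++ sub_i i ++ sub_e u
          | AConst v => sub_e v
          end
with sub_e (e : eterm) : list term :=
  TE e :: match e with
          | EVar _ => []
          | ERead b i => sub_a b ++ sub_i i
          end
with sub_i (i : iterm) : list term := [TI i].

Fixpoint sub_f (f : formula) : list term :=
  match f with
  | FTrue | FFalse => []
  | FEqI i j => sub_i i ++ sub_i j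
  | FEqE u v => sub_e u ++ sub_e v
  | FEqA a b => sub_a a ++ sub_a b
  | FNot g => sub_f g
  | FAnd g h | FOr g h | FImp g h => sub_f g ++ sub_f h
  | FExDist ks => flat_map sub_i ks
  end.

Fixpoint eqA_atoms (f : formula) : list (aterm * aterm) :=
  match f with
  | FEqA a b => [(a, b)]
  | FNot g => eqA_atoms g
  | FAnd g h | FOr g h | FImp g h => eqA_atoms g ++ eqA_atoms h
  | _ => []
  end.

Definition inT (A : list formula) (t : term) : Prop :=
  exists f, In f A /\ In t (sub_f f).

Definition eqA_inT (A : list formula) (a c : aterm) : Prop :=
  exists f, In f A /\ In (a, c) (eqA_atoms f).

(* Semantics.  An interpretation in the empty theory: arbitrary carriers
   and arbitrary (uninterpreted) read / write / constant-array functions,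
   plus values of all constant symbols. *)

Record interp : Type := Interp {
  Idx : Type; Elm : Type; Arr : Type;
  rd  : Arr -> Idx -> Elm;
  wr  : Arr -> Idx -> Elm -> Arr;
  cst : Elm -> Arr;
  aval : nat -> Arr;
  evl  : nat -> Elm;
  ival : nat -> Idx;
  kval : aterm -> aterm -> Idx
}.

Fixpoint ev_a (M : interp) (a : aterm) : Arr M :=
  match a with
  | AVar n => aval M n
  | AWrite b i u => wr M (ev_a M b) (ev_i M i) (ev_e M u)
  | AConst v => cst M (ev_e M v)
  end
with ev_e (M : interp) (e : eterm) : Elm M :=
  match e with
  | EVar n => evl M n
  | ERead b i => rd M (ev_a M b) (ev_i M i)
  end
with ev_i (M : interp) (i : iterm) : Idx M :=
  match i with
  | IVar n => ival M n
  | IK a c => kval M a c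
  end.

Fixpoint sat (M : interp) (f : formula) : Prop :=
  match f with
  | FTrue => True
  | FFalse => False
  | FEqI i j => ev_i M i = ev_i M j
  | FEqE u v => ev_e M u = ev_e M v
  | FEqA a b => ev_a M a = ev_a M b
  | FNot g => ~ sat M g
  | FAnd g h => sat M g /\ sat M h
  | FOr g h => sat M g \/ sat M h
  | FImp g h => sat M g -> sat M h
  | FExDist ks => exists d : Idx M, forall k, In k ks -> d <> ev_i M k
  end.

Definition models_AW (M : interp) (A : list formula) : Prop :=
  (forall f, In f A -> sat M f) /\
  (forall a i u, inT A (TA (AWrite a i u)) ->
     sat M (FEqE (ERead (AWrite a i u) i) u)).

Definition arr_model (M : interp) : Prop :=
  (forall a i j u, i = j -> rd M (wr M a i u) j = u) /\
  (forall a i j u, i <> j -> rd M (wr M a i u) j = rd M a j) /\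
  (forall a b, a = b <-> (forall i, rd M a i = rd M b i)) /\
  (forall i v, rd M (cst M v) i = v).

Definition valid_arr (f : formula) : Prop :=
  forall M : interp, arr_model M -> sat M f.

(* second argument of pi: a read term b[i] or a constant array <v> *)
Inductive key : Type :=
| KRead (b : aterm) (i : iterm)
| KConst (v : eterm).

Definition pimap := aterm -> key -> option (formula * aterm).

Definition pi0 : pimap := fun _ _ => None.

Inductive config : Type :=
| Unsat
| Conf (A : list formula) (I : option interp) (pi : pimap).

Definition is_base (a : aterm) (t : key) : Prop :=
  match t with
  | KRead b _ => b = a
  | KConst v => a = AConst v
  end.

(* Reasons R(a,t) = r  (relational, since R is defined by recursion along pi) *)
Inductive Reason (pi : pimap) : aterm -> key -> formula -> Prop :=
| R_base a t :
    pi a t <> None -> is_base a t -> Reason pi a t FTrue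
| R_step a t r c rc :
    pi a t = Some (r, c) -> ~ is_base a t -> Reason pi c t rc ->
    Reason pi a t (FAnd rc r).

(* Updated indices I(a,<v>) = S  (sets represented as lists) *)
Inductive UpdIdx (pi : pimap) : aterm -> eterm -> list iterm -> Prop :=
| U_base a v :
    pi a (KConst v) <> None -> a = AConst v -> UpdIdx pi a v []
| U_row a v b j u S :
    pi a (KConst v) = Some (FTrue, b) -> a <> AConst v ->
    (b = AWrite a j u \/ a = AWrite b j u) ->
    UpdIdx pi b v S -> UpdIdx pi a v (j :: S)
| U_other a v r c S :
    pi a (KConst v) = Some (r, c) -> a <> AConst v ->
    ~ (r = FTrue /\ exists j u, c = AWrite a j u \/ a = AWrite c j u) ->
    UpdIdx pi c v S -> UpdIdx pi a v S.

Definition upd (pi : pimap) (a : aterm) (t : key) (x : formula * aterm)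
  (pi' : pimap) : Prop :=
  pi' a t = Some x /\
  (forall a' t', (a', t') <> (a, t) -> pi' a' t' = pi a' t').

(* I |= phi  (requires I <> none) *)
Definition isat (I : option interp) (f : formula) : Prop :=
  match I with Some M => sat M f | None => False end.

Inductive step : config -> config -> Prop :=
| S_Interp A pi M :
    models_AW M A ->
    step (Conf A None pi) (Conf A (Some M) pi)
| S_Conf A I pi :
    (~ exists M : interp, models_AW M A) ->
    step (Conf A I pi) Unsat
| S_InitR A I pi pi' a i :
    inT A (TE (ERead a i)) ->
    upd pi a (KRead a i) (FTrue, a) pi' ->
    step (Conf A I pi) (Conf A I pi')
| S_InitW A I pi pi' a i u :
    inT A (TA (AWrite a i u)) ->
    upd pi (AWrite a i u) (KRead (AWrite a i u) i) (FTrue, AWrite a i u) pi' ->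
    step (Conf A I pi) (Conf A I pi')
| S_RowD A I pi pi' a j u b i :
    isat I (FNot (FEqI i j)) ->
    pi (AWrite a j u) (KRead b i) <> None ->
    pi a (KRead b i) = None ->
    upd pi a (KRead b i) (FNot (FEqI i j), AWrite a j u) pi' ->
    step (Conf A I pi) (Conf A I pi')
| S_RowU A I pi pi' a j u b i :
    isat I (FNot (FEqI i j)) ->
    inT A (TA (AWrite a j u)) ->
    pi a (KRead b i) <> None ->
    pi (AWrite a j u) (KRead b i) = None ->
    upd pi (AWrite a j u) (KRead b i) (FNot (FEqI i j), a) pi' ->
    step (Conf A I pi) (Conf A I pi')
| S_EqR A I pi pi' a c b i :
    isat I (FEqA a c) ->
    inT A (TA a) -> inT A (TA c) -> eqA_inT A a c ->
    pi a (KRead b i) <> None ->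
    pi c (KRead b i) = None ->
    upd pi c (KRead b i) (FEqA a c, a) pi' ->
    step (Conf A I pi) (Conf A I pi')
| S_EqL A I pi pi' a c b i :
    isat I (FEqA a c) ->
    inT A (TA a) -> inT A (TA c) -> eqA_inT A a c ->
    pi c (KRead b i) <> None ->
    pi a (KRead b i) = None ->
    upd pi a (KRead b i) (FEqA a c, c) pi' ->
    step (Conf A I pi) (Conf A I pi')
| S_CongR A I pi a b i c k r1 r2 :
    isat I (FEqI i k) ->
    pi a (KRead b i) <> None ->
    pi a (KRead c k) <> None ->
    isat I (FNot (FEqE (ERead b i) (ERead c k))) ->
    Reason pi a (KRead b i) r1 ->
    Reason pi a (KRead c k) r2 ->
    step (Conf A I pi)
         (Conf (FImp (FAnd r1 (FAnd r2 (FEqI i k)))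
                     (FEqE (ERead b i) (ERead c k)) :: A) None pi0)
| S_DisEq A I pi a c :
    isat I (FNot (FEqA a c)) ->
    inT A (TA a) -> inT A (TA c) -> eqA_inT A a c ->
    ~ inT A (TI (IK a c)) -> ~ inT A (TI (IK c a)) ->
    step (Conf A I pi)
         (Conf (FImp (FNot (FEqA a c))
                     (FNot (FEqE (ERead a (IK a c)) (ERead c (IK a c)))) :: A)
               None pi0)
| S_Roc A I pi v b i r :
    pi (AConst v) (KRead b i) <> None ->
    isat I (FNot (FEqE (ERead b i) v)) ->
    Reason pi (AConst v) (KRead b i) r ->
    step (Conf A I pi)
         (Conf (FImp r (FEqE (ERead b i) v) :: A) None pi0)
| S_InitC A I pi pi' v :
    inT A (TA (AConst v)) ->
    upd pi (AConst v) (KConst v) (FTrue, AConst v) pi' ->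
    step (Conf A I pi) (Conf A I pi')
| S_CowD A I pi pi' a j u v S :
    pi (AWrite a j u) (KConst v) <> None ->
    pi a (KConst v) = None ->
    UpdIdx pi (AWrite a j u) v S ->
    isat I (FExDist (S ++ [j])) ->
    upd pi a (KConst v) (FTrue, AWrite a j u) pi' ->
    step (Conf A I pi) (Conf A I pi')
| S_CowU A I pi pi' a j u v S :
    pi a (KConst v) <> None ->
    pi (AWrite a j u) (KConst v) = None ->
    inT A (TA (AWrite a j u)) ->
    UpdIdx pi a v S ->
    isat I (FExDist (S ++ [j])) ->
    upd pi (AWrite a j u) (KConst v) (FTrue, a) pi' ->
    step (Conf A I pi) (Conf A I pi')
| S_CEqR A I pi pi' a c v :
    isat I (FEqA a c) ->
    inT A (TA a) -> inT A (TA c) -> eqA_inT A a c ->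
    pi a (KConst v) <> None ->
    pi c (KConst v) = None ->
    upd pi c (KConst v) (FEqA a c, a) pi' ->
    step (Conf A I pi) (Conf A I pi')
| S_CEqL A I pi pi' a c v :
    isat I (FEqA a c) ->
    inT A (TA a) -> inT A (TA c) -> eqA_inT A a c ->
    pi c (KConst v) <> None ->
    pi a (KConst v) = None ->
    upd pi a (KConst v) (FEqA a c, c) pi' ->
    step (Conf A I pi) (Conf A I pi')
| S_CongC A I pi a v w Sv Sw rv rw :
    pi a (KConst v) <> None ->
    pi a (KConst w) <> None ->
    isat I (FNot (FEqE v w)) ->
    UpdIdx pi a v Sv -> UpdIdx pi a w Sw ->
    isat I (FExDist (Sv ++ Sw)) ->
    Reason pi a (KConst v) rv ->
    Reason pi a (KConst w) rw ->
    step (Conf A I pi)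
         (Conf (FImp (FAnd rv (FAnd rw (FExDist (Sv ++ Sw)))) (FEqE v w) :: A)
               None pi0).

Inductive derivable (A0 : list formula) : config -> Prop :=
| D_init : derivable A0 (Conf A0 None pi0)
| D_step C C' : derivable A0 C -> step C C' -> derivable A0 C'.

(* Every read entry pi(a, b[i]) = (r, c) created by a rule is justified in the
   array theory: r implies a[i] = c[i] (by row-ne for RowD/RowU, by congruence
   for EqR/EqL, trivially for InitR/InitW), and conflict rules reset pi.  The
   reason R(a, b[i]) is the conjunction of the labels along the pi-chain from a
   to b, so chaining these equalities gives a[i] = b[i]. *)
From Stdlib Require Import List Classical.

Definition read_entries_sound (pi : pimap) : Prop :=
  forall a b i r c, pi a (KRead b i) = Some (r, c) ->
    valid_arr (FImp r (FEqE (ERead a i) (ERead c i))).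

Definition config_sound (C : config) : Prop :=
  match C with Unsat => True | Conf _ _ pi => read_entries_sound pi end.

Lemma valid_read_refl r a i : valid_arr (FImp r (FEqE (ERead a i) (ERead a i))).
Proof. intros M _ _; reflexivity. Qed.

Lemma valid_read_write_ne a j u i :
  valid_arr (FImp (FNot (FEqI i j)) (FEqE (ERead a i) (ERead (AWrite a j u) i))).
Proof.
  intros M (_ & Hrow_ne & _) Hij; simpl in *.
  symmetry; apply Hrow_ne; congruence.
Qed.

Lemma valid_read_congr a c i :
  valid_arr (FImp (FEqA a c) (FEqE (ERead a i) (ERead c i))).
Proof. intros M _ Hac; simpl in *; rewrite Hac; reflexivity. Qed.

Lemma valid_eqE_sym r x y :
  valid_arr (FImp r (FEqE x y)) -> valid_arr (FImp r (FEqE y x)).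
Proof. intros H M HM Hr; symmetry; exact (H M HM Hr). Qed.

Lemma read_entries_sound_pi0 : read_entries_sound pi0.
Proof. intros a b i r c H; discriminate H. Qed.

Lemma read_entries_sound_upd pi a t r c pi' :
  read_entries_sound pi -> upd pi a t (r, c) pi' ->
  (forall b i, t = KRead b i ->
     valid_arr (FImp r (FEqE (ERead a i) (ERead c i)))) ->
  read_entries_sound pi'.
Proof.
  intros Hpi [Hnew Hold] Hentry a' b' i' r' c' H.
  destruct (classic ((a', KRead b' i') = (a, t))) as [E | E].
  - injection E as <- <-; rewrite Hnew in H; injection H as <- <-.
    exact (Hentry b' i' eq_refl).
  - rewrite Hold in H by exact E; exact (Hpi _ _ _ _ _ H).
Qed.

Lemma step_config_sound C C' : config_sound C -> step C C' -> config_sound C'.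
Proof.
  intros HC Hs; destruct Hs; simpl in *;
    try exact Logic.I; try exact read_entries_sound_pi0; try exact HC;
    (eapply read_entries_sound_upd; [exact HC | eassumption |]);
    intros b0 i0 Ht; try discriminate Ht; injection Ht as <- <-.
  - apply valid_read_refl.
  - apply valid_read_refl.
  - apply valid_read_write_ne.
  - apply valid_eqE_sym, valid_read_write_ne.
  - apply valid_eqE_sym, valid_read_congr.
  - apply valid_read_congr.
Qed.

Lemma derivable_config_sound A0 C : derivable A0 C -> config_sound C.
Proof.
  induction 1 as [| C C' _ IH Hs].
  - exact read_entries_sound_pi0.
  - exact (step_config_sound C C' IH Hs).
Qed.

Lemma reason_read_valid pi a b i r :
  read_entries_sound pi -> Reason pi a (KRead b i) r ->
  valid_arr (FImp r (FEqE (ERead a i) (ERead b i))).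
Proof.
  intros Hpi HR; remember (KRead b i) as t eqn:Ht.
  induction HR as [a t _ Hbase | a t r c rc Hac _ _ IH]; subst t.
  - simpl in Hbase; subst; apply valid_read_refl.
  - intros M HM [Hrc Hr].
    transitivity (ev_e M (ERead c i)).
    + exact (Hpi _ _ _ _ _ Hac M HM Hr).
    + exact (IH eq_refl M HM Hrc).
Qed.

Theorem mainTheorem4 :
  forall (A0 A : list formula) (I : option interp) (pi : pimap),
    derivable A0 (Conf A I pi) ->
    forall (a b : aterm) (i : iterm),
      pi a (KRead b i) <> None ->
      forall r : formula, Reason pi a (KRead b i) r ->
      valid_arr (FImp r (FEqE (ERead a i) (ERead b i))).
Proof.
  intros A0 A I pi HD a b i _ r HR.
  exact (reason_read_valid pi a b i r (derivable_config_sound A0 _ HD) HR).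
Qed.
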